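(* Let $\mathcal{X}$ be a measurable space, let $(X,Y)$ be a random pair with $X\in\mathcal{X}$, $Y\in\mathbb{R}$, and let $D=(X_i,Y_i)_{i=1}^N$ be an i.i.d. sample distributed as $(X,Y)$. Let $F$ be a convex class of functions $\mathcal{X}\to\mathbb{R}$ (with $\mathbb{E}f^2(X)<\infty$ for $f\in F$, $\mathbb{E}Y^2<\infty$), and let $f^*\in F$ satisfy $f^*=\operatorname{argmin}_{f\in F}\mathbb{E}(f(X)-Y)^2$. Let $n$ divide $N$, $m=N/n$, and let $I_1,\dots,I_n$ be the natural decomposition of $\{1,\dots,N\}$ into consecutive blocks of cardinality $m$. For $f,h\in F$ and $1\le j\le n$ set $$\mathbb{Q}_{f,h}(j)=\frac1m\sum_{i\in I_j}(f-h)^2(X_i),\qquad \mathbb{M}_{f,h}(j)=\frac2m\sum_{i\in I_j}(f-h)(X_i)\,(h(X_i)-Y_i),$$ $$\mathbb{B}_{f,h}(j)=\frac1m\sum_{i\in I_j}(f(X_i)-Y_i)^2-\frac1m\sum_{i\in I_j}(h(X_i)-Y_i)^2=\mathbb{Q}_{f,h}(j)+\mathbb{M}_{f,h}(j).$$ Let $\widetilde f\in F$ be a minimizer over $F$ of $\phi(f)=\max_{g\in F}\mathrm{Med}(\mathbb{B}_{f,g})$, where $\mathrm{Med}(\mathbb{B}_{f,g})$ is a median of the vector $(\mathbb{B}_{f,g}(j))_{j=1}^n$. Let $r>0$ and $\gamma_1,\gamma_2>0$, and suppose the sample $D$ satisfies: (1) for every $f\in F$ with $\|f-f^*\|_{L_2}\ge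 r$, one has $\mathbb{B}_{f,f^*}(j)\ge\gamma_1\|f-f^*\|_{L_2}^2$ for at least $0.99n$ of the blocks $j$; (2) for every $f\in F$ with $\|f-f^*\|_{L_2}<r$, one has $|\mathbb{M}_{f,f^*}(j)-\mathbb{E}\mathbb{M}_{f,f^*}(j)|\le\gamma_2r^2$ for at least $0.99n$ of the blocks $j$. If $\gamma_1>\gamma_2$, then $$\mathbb{E}\big((\widetilde f(X)-Y)^2\,\big|\,D\big)\le\mathbb{E}(f^*(X)-Y)^2+(1+2\gamma_2)r^2.$$
   Context: $\|f\|_{L_2}=(\mathbb{E}f^2(X))^{1/2}$ with respect to the distribution of $X$. For a fixed (non-random) function $f$, $\mathbb{E}\mathbb{M}_{f,f^*}(j)=2\mathbb{E}\big[(f-f^* )(X)(f^*(X)-Y)\big]$; for the data-dependent $\widetilde f$, $\mathbb{E}(\cdot\mid D)$ denotes expectation over an independent copy $(X,Y)$ with $D$ fixed. *)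

From HB Require Import structures.
From mathcomp Require Import all_boot all_order all_algebra.
From mathcomp Require Import all_classical all_reals all_analysis.
Set Implicit Arguments. Unset Strict Implicit. Unset Printing Implicit Defensive.
Import Order.TTheory GRing.Theory Num.Theory.
Local Open Scope ring_scope.

Section Defs.
Variables (d : measure_display) (T : measurableType d) (R : realType).

(* Sample D = (X_i,Y_i), indexed from 0: D i for i < N = n*m.
   Block j (0 <= j < n) is I_j = {j*m + k | k < m}. *)

Definition Qb (D : nat -> T * R) (m j : nat) (f h : T -> R) : R :=
  m%:R^-1 * \sum_(k < m) (f (D (j * m + k)%N).1 - h (D (j * m + k)%N).1) ^+ 2.

Definition Mb (D : nat -> T * R) (m j : nat) (f h : T -> R) : R :=
  2 / m%:R * \sum_(k < m) ((f (D (j * m + k)%N).1 - h (D (j * m + k)%N).1) *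
                          (h (D (j * m + k)%N).1 - (D (j * m + k)%N).2)).

Definition Bb (D : nat -> T * R) (m j : nat) (f h : T -> R) : R :=
  m%:R^-1 * \sum_(k < m) (f (D (j * m + k)%N).1 - (D (j * m + k)%N).2) ^+ 2
  - m%:R^-1 * \sum_(k < m) (h (D (j * m + k)%N).1 - (D (j * m + k)%N).2) ^+ 2.

Definition is_median (n : nat) (v : 'I_n -> R) (mu : R) : Prop :=
  (n%:R / 2 : R) <= #|[pred j : 'I_n | v j <= mu]|%:R /\
  (n%:R / 2 : R) <= #|[pred j : 'I_n | mu <= v j]|%:R.

Definition convex_class (F : set (T -> R)) : Prop :=
  forall f g, F f -> F g -> forall t : R, 0 <= t <= 1 ->
    F (fun x => t * f x + (1 - t) * g x).

(* L2 norm w.r.t. the distribution of X, where P is the law of (X,Y) *)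
Definition L2norm (P : probability (T * R)%type R) (f : T -> R) : R :=
  Num.sqrt (Rintegral P setT (fun z => (f z.1) ^+ 2)).

(* E M_{f,h}(j) = 2 E[(f-h)(X)(h(X)-Y)] *)
Definition EMb (P : probability (T * R)%type R) (f h : T -> R) : R :=
  2 * Rintegral P setT (fun z => (f z.1 - h z.1) * (h z.1 - z.2)).

Definition phi (F : set (T -> R)) (n m : nat) (D : nat -> T * R)
  (med : ('I_n -> R) -> R) (f : T -> R) : \bar R :=
  ereal_sup [set (med (fun j : 'I_n => Bb D m j f g))%:E | g in F]%classic.

End Defs.

From HB Require Import structures.
From mathcomp Require Import all_boot all_order all_algebra.
From mathcomp Require Import all_classical all_reals all_analysis.
From mathcomp Require Import measurable_realfun ring lra.
Set Implicit Arguments. Unset Strict Implicit. Unset Printing Implicit Defensive.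
Import Order.TTheory GRing.Theory Num.Theory.
Local Open Scope ring_scope.

(* Convexity of F and minimality of fs give the variational inequality
   E M_{g,fs} >= 0 for every g in F: the risk along the segment from fs to g
   is fs's risk plus t^2 ||g - fs||^2 + t E M_{g,fs}.  Half of the blocks lie
   on either side of a median and 99% of all blocks are good, so each side
   contains a good block.  Hence every median of B_{fs,g} = - B_{g,fs} is at
   most gamma2 r^2: on a good block (1) gives B_{g,fs} >= 0 when g is far
   from fs, and (2) gives B_{g,fs} >= M_{g,fs} >= E M_{g,fs} - gamma2 r^2
   when g is near fs.  Thus phi(ft) <= phi(fs) <= gamma2 r^2.  Meeting the
   good blocks once more, gamma1 > gamma2 rules out ft far from fs, and near
   fs we get E M_{ft,fs} <= 2 gamma2 r^2, while the excess risk of ft is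
   exactly ||ft - fs||^2 + E M_{ft,fs}. *)

Section square_integrable.
Context d (T : measurableType d) (R : realType) (mu : {measure set T -> \bar R}).

Definition square_integrable (a : T -> R) : Prop :=
  measurable_fun setT a /\ mu.-integrable setT (EFin \o (fun x => a x ^+ 2)).

Lemma EFin_Rintegral (a : T -> R) : mu.-integrable setT (EFin \o a) ->
  (Rintegral mu setT a)%:E = (\int[mu]_x (a x)%:E)%E.
Proof. by move=> ia; rewrite /Rintegral fineK // integrable_fin_num. Qed.

Lemma square_integrable_mul a b : square_integrable a -> square_integrable b ->
  mu.-integrable setT (EFin \o (fun x => a x * b x)).
Proof.
move=> [ma ia] [mb ib].
apply: (le_integrable measurableT _ _ (integrableD measurableT ia ib)).
  by apply/measurable_EFinP; exact: measurable_funM.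
move=> x _ /=; rewrite lee_fin normrM (le_trans _ (ler_norm _)) //.
have := normr_ge0 (a x); have := normr_ge0 (b x).
rewrite -[a x ^+ 2]real_normK ?num_real // -[b x ^+ 2]real_normK ?num_real //.
nra.
Qed.

Lemma square_integrableB a b : square_integrable a -> square_integrable b ->
  square_integrable (fun x => a x - b x).
Proof.
move=> sa sb; split; first exact: measurable_funB sa.1 sb.1.
have ab2 := integrableZl measurableT (-2) (square_integrable_mul sa sb).
apply: eq_integrable (integrableD _ (integrableD _ sa.2 sb.2) ab2) => // x _.
by rewrite /= -!EFinD; congr EFin; ring.
Qed.

Lemma Rintegral_sqrB_expand a b c : square_integrable a ->
  square_integrable b -> square_integrable c ->
  Rintegral mu setT (fun x => (a x - c x) ^+ 2) =
  Rintegral mu setT (fun x => (b x - c x) ^+ 2) +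
  Rintegral mu setT (fun x => (a x - b x) ^+ 2) +
  2 * Rintegral mu setT (fun x => (a x - b x) * (b x - c x)).
Proof.
move=> sa sb sc; have sab := square_integrableB sa sb.
have sbc := square_integrableB sb sc.
have iabc := square_integrable_mul sab sbc.
have i2abc := integrableZl measurableT 2 iabc.
have [[_ iab2] [_ ibc2]] := (sab, sbc).
have isum := integrableD measurableT ibc2 iab2.
rewrite -RintegralZl // -RintegralD // -RintegralD //.
by apply: eq_Rintegral => x _; ring.
Qed.

End square_integrable.

Lemma lincoef_ge0 (R : realFieldType) (c e : R) : 0 <= c ->
  (forall t, 0 < t <= 1 -> 0 <= t ^+ 2 * c + t * e) -> 0 <= e.
Proof.
move=> c_ge0 quad_ge0; rewrite leNgt; apply/negP => e_lt0.
pose t := - e / (2 * (c - e)).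
have t_gt0 : 0 < t by rewrite divr_gt0 ?oppr_gt0 // mulr_gt0 //; lra.
have te : t * (2 * (c - e)) = - e by rewrite divfK // gt_eqF // mulr_gt0 //; lra.
have t_le1 : t <= 1 by nra.
(* t c + e = t e + e / 2 < 0, so t ^+ 2 * c + t * e = t * (t c + e) < 0 *)
have := quad_ge0 t; rewrite t_gt0 t_le1 /=; nra.
Qed.

Lemma exists_predI_card (T : finType) (A B : pred T) :
  (#|T| < #|A| + #|B|)%N -> exists x, A x && B x.
Proof.
case: (pickP [predI A & B]) => [x ABx|AB0]; first by exists x.
by rewrite -cardUI (eq_card0 AB0) addn0 ltnNge max_card.
Qed.

Lemma half_meets_majority (R : realFieldType) n (A B : pred 'I_n) : (0 < n)%N ->
  n%:R / 2 <= #|A|%:R :> R -> 99 / 100 * n%:R <= #|B|%:R :> R ->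
  exists j, A j && B j.
Proof.
move=> n_gt0 hA hB; apply: exists_predI_card; rewrite card_ord -(ltr_nat R) natrD.
have : (0 : R) < n%:R by rewrite ltr0n.
lra.
Qed.

Section risk.
Context d (T : measurableType d) (R : realType) (P : probability (T * R)%type R).

Definition risk (f : T -> R) : R := Rintegral P setT (fun z => (f z.1 - z.2) ^+ 2).

Lemma L2norm_sqr f : L2norm P f ^+ 2 = Rintegral P setT (fun z => f z.1 ^+ 2).
Proof. by rewrite /L2norm sqr_sqrtr // Rintegral_ge0 // => z _; exact: sqr_ge0. Qed.

Lemma risk_expand f h : square_integrable P (fun z => f z.1) ->
  square_integrable P (fun z => h z.1) -> square_integrable P (fun z => z.2) ->
  risk f = risk h + L2norm P (fun x => f x - h x) ^+ 2 + EMb P f h.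
Proof. by move=> sf sh sY; rewrite /risk (Rintegral_sqrB_expand sf sh sY) L2norm_sqr. Qed.

Section segment.
Variables (f h : T -> R) (t : R).
Hypotheses (sf : square_integrable P (fun z => f z.1))
  (sh : square_integrable P (fun z => h z.1)).

Lemma L2norm_segment :
  L2norm P (fun x => t * f x + (1 - t) * h x - h x) ^+ 2 =
  t ^+ 2 * L2norm P (fun x => f x - h x) ^+ 2.
Proof.
rewrite !L2norm_sqr -RintegralZl //; last exact: (square_integrableB sf sh).2.
by apply: eq_Rintegral => z _; ring.
Qed.

Lemma EMb_segment : square_integrable P (fun z => z.2) ->
  EMb P (fun x => t * f x + (1 - t) * h x) h = t * EMb P f h.
Proof.
move=> sY; rewrite /EMb mulrCA; congr (_ * _).
rewrite -RintegralZl //; last first.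
  exact: square_integrable_mul (square_integrableB sf sh) (square_integrableB sh sY).
by apply: eq_Rintegral => z _; ring.
Qed.

End segment.

Lemma EMb_ge0_of_risk_argmin (F : set (T -> R)) fs : convex_class F ->
  (forall f, F f -> square_integrable P (fun z => f z.1)) ->
  square_integrable P (fun z => z.2) ->
  F fs -> (forall f, F f -> risk fs <= risk f) ->
  forall g, F g -> 0 <= EMb P g fs.
Proof.
move=> cvxF sF sY Ffs fs_min g Fg.
apply: (@lincoef_ge0 _ (L2norm P (fun x => g x - fs x) ^+ 2)); first exact: sqr_ge0.
move=> t /andP[t_gt0 t_le1].
have Fgt : F (fun x => t * g x + (1 - t) * fs x) by apply: (cvxF _ _ Fg Ffs); rewrite ltW.
have := fs_min _ Fgt; rewrite (risk_expand (sF _ Fgt) (sF _ Ffs) sY).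
rewrite (L2norm_segment t (sF _ Fg) (sF _ Ffs)) (EMb_segment t (sF _ Fg) (sF _ Ffs) sY).
lra.
Qed.

End risk.

Section blocks.
Context d (T : measurableType d) (R : realType) (D : nat -> T * R) (m j : nat).

Lemma Bb_swap f h : Bb D m j f h = - Bb D m j h f.
Proof. by rewrite /Bb opprB. Qed.

Lemma BbE f h : Bb D m j f h = Qb D m j f h + Mb D m j f h.
Proof.
rewrite /Bb /Qb /Mb !mulr_sumr -sumrB -big_split; apply: eq_bigr => k _ /=.
ring.
Qed.

Lemma Qb_ge0 f h : 0 <= Qb D m j f h.
Proof. by rewrite mulr_ge0 ?invr_ge0 ?ler0n // sumr_ge0 // => k _; exact: sqr_ge0. Qed.

End blocks.

Section median_tournament.
Context d (T : measurableType d) (R : realType) (P : probability (T * R)%type R).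
Variables (F : set (T -> R)) (fs : T -> R) (n m : nat) (D : nat -> T * R).
Variables (med : ('I_n -> R) -> R) (r gamma1 gamma2 : R).
Hypotheses (n_gt0 : (0 < n)%N) (med_median : forall v, is_median v (med v)).
Hypotheses (r_gt0 : 0 < r) (gamma1_ge0 : 0 <= gamma1) (gamma2_ge0 : 0 <= gamma2).
Hypothesis far_blocks : forall f, F f -> r <= L2norm P (fun x => f x - fs x) ->
  (99 / 100 * n%:R : R) <= #|[pred j : 'I_n |
    gamma1 * L2norm P (fun x => f x - fs x) ^+ 2 <= Bb D m j f fs]|%:R.
Hypothesis near_blocks : forall f, F f -> L2norm P (fun x => f x - fs x) < r ->
  (99 / 100 * n%:R : R) <= #|[pred j : 'I_n |
    `|Mb D m j f fs - EMb P f fs| <= gamma2 * r ^+ 2]|%:R.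
Hypothesis EMb_fs_ge0 : forall g, F g -> 0 <= EMb P g fs.

Lemma med_Bb_fs_le g : F g ->
  med (fun j => Bb D m j fs g) <= gamma2 * r ^+ 2.
Proof.
move=> Fg; have [_ med_le] := med_median (fun j => Bb D m j fs g).
have := mulr_ge0 gamma2_ge0 (sqr_ge0 r).
have [far|near] := leP r (L2norm P (fun x => g x - fs x)).
  have [j /andP[/= medj Bj]] := half_meets_majority n_gt0 med_le (far_blocks Fg far).
  rewrite Bb_swap in medj.
  have := mulr_ge0 gamma1_ge0 (sqr_ge0 (L2norm P (fun x => g x - fs x))).
  lra.
have [j /andP[/= medj]] := half_meets_majority n_gt0 med_le (near_blocks Fg near).
rewrite Bb_swap BbE ler_norml in medj * => /andP[Mj_ge _].
have := Qb_ge0 D m j g fs; have := EMb_fs_ge0 Fg.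
lra.
Qed.

Lemma phi_fs_le : (phi F m D med fs <= (gamma2 * r ^+ 2)%:E)%E.
Proof. by apply: ge_ereal_sup => _ [g Fg <-]; rewrite lee_fin med_Bb_fs_le. Qed.

Lemma med_Bb_le_of_phi_le f : F fs -> (phi F m D med f <= phi F m D med fs)%E ->
  med (fun j => Bb D m j f fs) <= gamma2 * r ^+ 2.
Proof.
move=> Ffs phi_le; rewrite -lee_fin.
apply: le_trans (le_trans phi_le phi_fs_le).
by apply: ereal_sup_ubound; exists fs.
Qed.

Lemma L2norm_lt_of_med_Bb_le f : F f -> gamma2 < gamma1 ->
  med (fun j => Bb D m j f fs) <= gamma2 * r ^+ 2 ->
  L2norm P (fun x => f x - fs x) < r.
Proof.
move=> Ff gamma21 med_le; rewrite ltNge; apply/negP => far.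
have [Bj_le_med _] := med_median (fun j => Bb D m j f fs).
have [j /andP[/= Bj_le Bj_ge]] := half_meets_majority n_gt0 Bj_le_med (far_blocks Ff far).
have r2_le : r ^+ 2 <= L2norm P (fun x => f x - fs x) ^+ 2.
  by rewrite !expr2 ler_pM // ltW.
have := ler_wpM2l gamma1_ge0 r2_le.
have := ltr_pM2r (exprn_gt0 2 r_gt0) gamma2 gamma1.
lra.
Qed.

Lemma EMb_le_of_med_Bb_le f : F f -> L2norm P (fun x => f x - fs x) < r ->
  med (fun j => Bb D m j f fs) <= gamma2 * r ^+ 2 ->
  EMb P f fs <= 2 * gamma2 * r ^+ 2.
Proof.
move=> Ff near med_le.
have [Bj_le_med _] := med_median (fun j => Bb D m j f fs).
have [j /andP[/= Bj_le]] := half_meets_majority n_gt0 Bj_le_med (near_blocks Ff near).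
rewrite BbE ler_norml in Bj_le * => /andP[Mj_ge _].
have := Qb_ge0 D m j f fs.
lra.
Qed.

End median_tournament.

Theorem theorem1 (d : measure_display) (T : measurableType d) (R : realType)
  (P : probability (T * R)%type R)
  (F : set (T -> R)) (fs : T -> R)
  (n m : nat) (D : nat -> T * R)
  (med : ('I_n -> R) -> R) (ft : T -> R)
  (r gamma1 gamma2 : R) :
  (0 < n)%N -> (0 < m)%N ->
  convex_class F ->
  (forall f, F f -> measurable_fun setT f) ->
  (forall f, F f -> P.-integrable setT (fun z => ((f z.1) ^+ 2)%:E)) ->
  P.-integrable setT (fun z => ((z.2) ^+ 2)%:E) ->
  F fs ->
  (forall f, F f -> (\int[P]_z (((fs z.1 - z.2) ^+ 2)%:E) <=
                     \int[P]_z (((f z.1 - z.2) ^+ 2)%:E))%E) ->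
  (forall v, is_median v (med v)) ->
  F ft ->
  (forall f, F f -> (phi F m D med ft <= phi F m D med f)%E) ->
  0 < r -> 0 < gamma1 -> 0 < gamma2 ->
  (forall f, F f -> r <= L2norm P (fun x => f x - fs x) ->
     (99 / 100 * n%:R : R) <=
     #|[pred j : 'I_n | gamma1 * L2norm P (fun x => f x - fs x) ^+ 2 <= Bb D m j f fs]|%:R) ->
  (forall f, F f -> L2norm P (fun x => f x - fs x) < r ->
     (99 / 100 * n%:R : R) <=
     #|[pred j : 'I_n | `|Mb D m j f fs - EMb P f fs| <= gamma2 * r ^+ 2]|%:R) ->
  gamma2 < gamma1 ->
  (\int[P]_z (((ft z.1 - z.2) ^+ 2)%:E) <=
   \int[P]_z (((fs z.1 - z.2) ^+ 2)%:E) + ((1 + 2 * gamma2) * r ^+ 2)%:E)%E.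
Proof.
move=> n_gt0 _ cvxF measF intF intY Ffs fs_opt med_median Fft ft_opt r_gt0
  gamma1_gt0 gamma2_gt0 far_blocks near_blocks gamma21.
have sF f : F f -> square_integrable P (fun z => f z.1).
  by move=> Ff; split; [exact: measurableT_comp (measF _ Ff) measurable_fst|exact: intF].
have sY : square_integrable P (fun z => z.2) by split; [exact: measurable_snd|].
have riskE f : F f -> (\int[P]_z (((f z.1 - z.2) ^+ 2)%:E))%E = (risk P f)%:E.
  by move=> Ff; rewrite EFin_Rintegral //; exact: (square_integrableB (sF _ Ff) sY).2.
have fs_min f : F f -> risk P fs <= risk P f.
  by move=> Ff; rewrite -lee_fin -!riskE //; exact: fs_opt.
have EMb_fs_ge0 := EMb_ge0_of_risk_argmin cvxF sF sY Ffs fs_min.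
have med_le := med_Bb_le_of_phi_le n_gt0 med_median (ltW gamma1_gt0) (ltW gamma2_gt0)
  far_blocks near_blocks EMb_fs_ge0 Ffs (ft_opt _ Ffs).
have near := L2norm_lt_of_med_Bb_le n_gt0 med_median r_gt0 (ltW gamma1_gt0)
  far_blocks Fft gamma21 med_le.
have EMb_le := EMb_le_of_med_Bb_le n_gt0 med_median near_blocks Fft near med_le.
rewrite !riskE // -EFinD lee_fin (risk_expand (sF _ Fft) (sF _ Ffs) sY).
have : L2norm P (fun x => ft x - fs x) ^+ 2 <= r ^+ 2.
  by rewrite !expr2 ler_pM // ?sqrtr_ge0 // ltW.
lra.
Qed.
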